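(* Consider the multi-good panel bundle model described in the context, under the maintained restrictions there (at most two goods purchased per period; $\Gamma_{j_1j_2}\le 0$ for every bundle $j_1j_2\ne AB$) and the stationarity assumption. Then for any $(x_s,x_t)$ and any $s\ne t\le T$: (i) for each good $j\in\mathcal L$: if $P_s(\{j\}\mid x_s,x_t)>P_t(\{j\}\mid x_s,x_t)$, then $\Delta_{s,t}\delta_j>0$ or there is $k\in\mathcal L$, $k\ne j$, with $\Delta_{s,t}\delta_k<0$; (ii) for each bundle $j_1j_2$ with $j_1\ne j_2\in\mathcal L$: if $P_s(\{j_1j_2\}\mid x_s,x_t)>P_t(\{j_1j_2\}\mid x_s,x_t)$, then there is $j\in\{j_1,j_2\}$ with $\Delta_{s,t}\delta_j>0$, or there is $k\in\mathcal L\setminus\{j_1,j_2\}$ with $\Delta_{s,t}\delta_k<0$; (iii) for $\ell\in\{A,B\}$ with $\ell_{-1}$ the other of $A,B$: if $P_s(D_\ell\mid x_s,x_t)>P_t(D_\ell\mid x_s,x_t)$ where $D_\ell=\{\ell,AB\}$, then at least one of the following holds: $\Delta_{s,t}\delta_\ell>0$; $\Delta_{s,t}(\delta_\ell+\operatorname{sign}(\Gamma_{AB})\delta_{\ell_{-1}})>0$; there is $k\in\mathcal L\setminus\{A,B\}$ with $\Delta_{s,t}(\delta_{\ell_{-1}}-\delta_k)>0$; there is $k\in\mathcal L\setminus\{A,B\}$ with $\Delta_{s,t}\delta_k<0$.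
   Context: Multi-good panel bundle model: consumers $i$, periods $t=1,\dots,T$, $T\ge2$ fixed; a finite set of goods $\mathcal L=\{A,B,\dots,J\}$. Consumers purchase at most two goods per period, so the choice set is $\mathcal C=\{O\}\cup\{j:j\in\mathcal L\}\cup\{j_1j_2:j_1\ne j_2\in\mathcal L\}$ ($j$ = only good $j$, $j_1j_2$ = the bundle of $j_1,j_2$, $O$ = outside option). Utilities: $u_{ijt}=X_{ijt}'\beta_0+\alpha_{ij}+\epsilon_{ijt}$ for $j\in\mathcal L$, with $X_{ijt}$ observed, $\alpha_{ij}$ unobserved time-invariant fixed effects, $\epsilon_{ijt}$ unobserved shocks; $u_{ij_1j_2t}=u_{ij_1t}+u_{ij_2t}+\Gamma_{j_1j_2}$ where $\Gamma_{j_1j_2}=\Gamma_{j_1j_2}(Z_i)$ depends only on an observed time-invariant covariate $Z_i$ (suppressed, so $\Gamma_{j_1j_2}$ is treated as a constant); $u_{iOt}=0$. $\Gamma_{AB}$ may have any sign; $\Gamma_{j_1j_2}\le0$ for all $j_1j_2\ne AB$. $Y_{it}\in\mathcal C$ is the utility-maximizing choice; ties have probability zero. Stationarity: for all $s,t\le T$, the distribution of $\epsilon_{is}=(\epsilon_{ijs})_{j\in\mathcal L}$ conditional on $(X_{is},X_{it},Z_i,\alpha_i)$ equals that of $\epsilon_{it}$ conditional on the same. Also some component of $X_{it}$ not in $Z_i$ has a nonzero coefficient. Notation: $P_t(K\mid x_s,x_t)=\Pr(Y_{it}\in K\mid X_{is}=x_s,X_{it}=x_t)$ (with $Z_i$ suppressed);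 $\delta_{jt}=x_{jt}'\beta_0$ for $j\in\mathcal L$; $\Delta_{s,t}\delta_j=\delta_{js}-\delta_{jt}$; $\operatorname{sign}(x)=\mathbb 1\{x>0\}-\mathbb 1\{x<0\}$. *)

From HB Require Import structures.
From mathcomp Require Import all_boot all_order all_algebra.
From mathcomp Require Import all_classical all_reals all_analysis.
Set Implicit Arguments. Unset Strict Implicit. Unset Printing Implicit Defensive.
Import Order.TTheory GRing.Theory Num.Theory.
Local Open Scope ring_scope.
Local Open Scope classical_set_scope.

(* Choice set C: a choice is a set of goods S : {set L} with #|S| <= 2.
   set0 = outside option O, [set j] = only good j, [set j1; j2] = bundle j1j2. *)
Definition feasible (L : finType) (S : {set L}) : bool := (#|S| <= 2)%N.

Definition xdelta (R : realType) (L : finType) (p : nat)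
  (x : L -> 'I_p -> R) (beta : 'I_p -> R) (j : L) : R :=
  \sum_(k < p) x j k * beta k.

Definition choice_util (R : realType) (L : finType)
  (Gamma : {set L} -> R) (u : L -> R) (S : {set L}) : R :=
  \sum_(j in S) u j + (if #|S| == 2%N then Gamma S else 0).

Definition is_max (R : realType) (L : finType)
  (Gamma : {set L} -> R) (u : L -> R) (S : {set L}) : Prop :=
  feasible S /\ forall S' : {set L}, feasible S' ->
    choice_util Gamma u S' <= choice_util Gamma u S.

From HB Require Import structures.
From mathcomp Require Import all_boot all_order all_algebra.
From mathcomp Require Import all_classical all_reals all_analysis.
From mathcomp Require Import ring lra.
Import Order.TTheory GRing.Theory Num.Theory.
Local Open Scope ring_scope.
Local Open Scope classical_set_scope.
Set Implicit Arguments. Unset Strict Implicit.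

(* Fix the values (a, e) of the fixed effects and of one period's shocks.  Each
   conclusion can only fail under sign restrictions on Δδ for which a
   deterministic revealed-preference argument applies: if some choice in K is
   optimal for the period-s index utilities δ_t + Δδ, then some choice in K is
   optimal for the period-t ones, with the same (a, e).  For a single good or a
   bundle this holds because Δδ is <= 0 on the chosen goods and >= 0 elsewhere;
   for D_l = {l, AB} the sign of Γ_AB tells how far the partner good may move.
   Stationarity, stated on rectangles, extends by the π-λ theorem to equality of
   the laws of (α_i, ε_is) and (α_i, ε_it); since ties at t are negligible,
   P(Y_s ∈ K) <= P(Y_t ∈ K), contradicting P_s(K) > P_t(K).  Neither s != t nor
   the nonzero coefficient of β is needed. *)

Section choice_utility.
Context {R : realType} {L : finType} (Gamma : {set L} -> R).
Implicit Types (u Dd : L -> R) (S : {set L}) (k : L).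
Local Notation U := (choice_util Gamma).

Lemma choice_util_set0 u : U u finset.set0 = 0.
Proof. by rewrite /choice_util big_set0 cards0 add0r. Qed.

Lemma choice_util_set1 u k : U u [set k]%SET = u k.
Proof. by rewrite /choice_util big_set1 cards1 addr0. Qed.

Lemma choice_util_set2 u k1 k2 : k1 != k2 ->
  U u [set k1; k2]%SET = u k1 + u k2 + Gamma [set k1; k2]%SET.
Proof.
by move=> k12; rewrite /choice_util cards2 k12 big_setU1 ?big_set1 ?addrA ?inE.
Qed.

Lemma choice_util_shift u Dd S :
  U (fun j => u j + Dd j) S = U u S + \sum_(j in S) Dd j.
Proof. by rewrite /choice_util big_split /= addrAC. Qed.

Lemma feasible_set0 : feasible (finset.set0 : {set L}).
Proof. by rewrite /feasible cards0. Qed.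

Lemma feasible_set1 k : feasible [set k]%SET.
Proof. by rewrite /feasible cards1. Qed.

Lemma feasible_set2 {k1 k2} : k1 != k2 -> feasible [set k1; k2]%SET.
Proof. by move=> k12; rewrite /feasible cards2 k12. Qed.

Lemma feasible_cases S : feasible S ->
  [\/ S = finset.set0, exists k, S = [set k]%SET
    | exists k1 k2, k1 != k2 /\ S = [set k1; k2]%SET].
Proof.
rewrite /feasible leq_eqVlt ltnS leq_eqVlt ltnS leqn0.
by case/or3P => [/cards2P|/cards1P|/eqP/cards0_eq]; [apply: Or33|apply: Or32|apply: Or31].
Qed.

Lemma is_max_unshift u Dd S0 :
  (forall j, j \in S0 -> Dd j <= 0) -> (forall k, k \notin S0 -> 0 <= Dd k) ->
  is_max Gamma (fun j => u j + Dd j) S0 -> is_max Gamma u S0.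
Proof.
move=> Dd_in Dd_out [fS0 maxS0]; split => // S fS.
have := maxS0 S fS; rewrite !choice_util_shift.
suff : \sum_(j in S0) Dd j <= \sum_(j in S) Dd j by lra.
rewrite (big_setID S) (big_setID S0 (A := S)) /= finset.setIC.
have : \sum_(j in S0 :\: S) Dd j <= 0.
  by apply: sumr_le0 => j; rewrite inE => /andP[_ /Dd_in].
have : 0 <= \sum_(j in S :\: S0) Dd j.
  by apply: sumr_ge0 => j; rewrite inE => /andP[/Dd_out].
lra.
Qed.

Definition dominated u S1 S2 :=
  forall S, feasible S -> U u S <= U u S1 \/ U u S <= U u S2.

Lemma is_max_dominated u S0 S1 S2 :
  is_max Gamma u S0 -> (S0 == S1) || (S0 == S2) -> dominated u S1 S2.
Proof. by move=> [_ maxS0] /orP[]/eqP<- S /maxS0; [left|right]. Qed.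

Lemma dominated_is_max u S1 S2 : feasible S1 -> feasible S2 ->
  dominated u S1 S2 -> is_max Gamma u S1 \/ is_max Gamma u S2.
Proof.
move=> fS1 fS2 dom; have [le12|lt21] := leP (U u S1) (U u S2).
  by right; split=> // S /dom[] /le_trans; apply=> //; apply: le_trans.
by left; split=> // S /dom[]// /le_trans; apply; apply: ltW.
Qed.

Lemma dominated_at_unshift u Dd S S1 S2 :
  \sum_(j in S1) Dd j <= \sum_(j in S) Dd j -> \sum_(j in S2) Dd j <= \sum_(j in S) Dd j ->
  U (fun j => u j + Dd j) S <= U (fun j => u j + Dd j) S1 \/
  U (fun j => u j + Dd j) S <= U (fun j => u j + Dd j) S2 ->
  U u S <= U u S1 \/ U u S <= U u S2.
Proof. by rewrite !choice_util_shift; lra. Qed.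

Definition choice_stays_in Dd (K : pred {set L}) :=
  forall u S0, S0 \in K -> is_max Gamma (fun j => u j + Dd j) S0 ->
    exists2 S, S \in K & is_max Gamma u S.

Lemma choice_stays_in_pred1 Dd S0 :
  (forall j, j \in S0 -> Dd j <= 0) -> (forall k, k \notin S0 -> 0 <= Dd k) ->
  choice_stays_in Dd (pred1 S0).
Proof.
by move=> Din Dout u S /eqP-> /is_max_unshift max; exists S0; [rewrite inE | exact: max].
Qed.

End choice_utility.

Section good_with_partner.
Context {R : realType} {L : finType} (Gamma : {set L} -> R) (l lm : L).
Hypothesis l_neq_lm : l != lm.
Implicit Types (u Dd : L -> R) (S : {set L}) (k : L).
Local Notation U := (choice_util Gamma).

Variant feasible_spec : {set L} -> Prop :=
  | FeasibleNone : feasible_spec finset.set0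
  | FeasibleL : feasible_spec [set l]%SET
  | FeasibleLm : feasible_spec [set lm]%SET
  | FeasibleLLm : feasible_spec [set l; lm]%SET
  | FeasibleK k of k \notin [:: l; lm] : feasible_spec [set k]%SET
  | FeasibleLK k of k \notin [:: l; lm] : feasible_spec [set l; k]%SET
  | FeasibleLmK k of k \notin [:: l; lm] : feasible_spec [set lm; k]%SET
  | FeasibleKK k1 k2 of k1 != k2 & k1 \notin [:: l; lm] & k2 \notin [:: l; lm] :
      feasible_spec [set k1; k2]%SET.

Lemma feasible_pairP k1 k2 : k1 != k2 -> feasible_spec [set k1; k2]%SET.
Proof.
have out k : k != l -> k != lm -> k \notin [:: l; lm].
  by move=> kl klm; rewrite !inE negb_or kl klm.
move=> k12; have [?|k1l] := eqVneq k1 l; first subst k1.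
  have [->|k2lm] := eqVneq k2 lm; first exact: FeasibleLLm.
  by apply: FeasibleLK; apply: out; rewrite // eq_sym.
have [?|k1lm] := eqVneq k1 lm; first subst k1.
  have [->|k2l] := eqVneq k2 l; first by rewrite finset.setUC; exact: FeasibleLLm.
  by apply: FeasibleLmK; apply: out; rewrite // eq_sym.
have k1out := out _ k1l k1lm.
have [->|k2l] := eqVneq k2 l; first by rewrite finset.setUC; apply: FeasibleLK.
have [->|k2lm] := eqVneq k2 lm; first by rewrite finset.setUC; apply: FeasibleLmK.
by apply: FeasibleKK; last apply: out.
Qed.

Lemma feasibleP {S} : feasible S -> feasible_spec S.
Proof.
case/feasible_cases => [->|[k ->]|[k1 [k2 [k12 ->]]]]; last exact: feasible_pairP.
  exact: FeasibleNone.
have [->|kl] := eqVneq k l; first exact: FeasibleL.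
have [->|klm] := eqVneq k lm; first exact: FeasibleLm.
by apply: FeasibleK; rewrite !inE negb_or kl.
Qed.

Lemma dominated_partner_unshift u Dd :
  (forall k1 k2, k1 != k2 -> [set k1; k2]%SET != [set l; lm]%SET ->
     Gamma [set k1; k2]%SET <= 0) ->
  Dd l <= 0 -> Dd l + Num.sg (Gamma [set l; lm]%SET) * Dd lm <= 0 ->
  (forall k, k \notin [:: l; lm] -> 0 <= Dd k /\ Dd lm <= Dd k) ->
  dominated Gamma (fun j => u j + Dd j) [set l]%SET [set l; lm]%SET ->
  dominated Gamma u [set l]%SET [set l; lm]%SET.
Proof.
move=> Gamma_le0 Dl sgD Dk dom S fS.
have sgG : (0 < Gamma [set l; lm]%SET -> Dd l + Dd lm <= 0) /\
           (Gamma [set l; lm]%SET < 0 -> Dd l <= Dd lm).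
  by split=> G0; move: sgD; rewrite ?(gtr0_sg G0) ?(ltr0_sg G0); lra.
have l_notin k : k \notin [:: l; lm] -> l \notin [set k]%SET.
  by rewrite !inE eq_sym => /norP[].
have sum_l : \sum_(j in [set l]%SET) Dd j = Dd l by rewrite big_set1.
have sum_llm : \sum_(j in [set l; lm]%SET) Dd j = Dd l + Dd lm.
  by rewrite big_setU1 ?big_set1 ?inE.
have by_shift : Dd l <= \sum_(j in S) Dd j -> Dd l + Dd lm <= \sum_(j in S) Dd j ->
    U u S <= U u [set l]%SET \/ U u S <= U u [set l; lm]%SET.
  by rewrite -sum_llm -sum_l => ? ?; exact: dominated_at_unshift (dom S fS).
(* The options not covered by [by_shift] are ∅, {lm} and {lm, k}.  For them the
   sign of Γ_{l,lm} is used: dominance of ∅ and {lm} gives u l + Dd l >= 0 when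
   Γ_{l,lm} <= 0, and u l + Dd l + Γ_{l,lm} >= 0 when Γ_{l,lm} >= 0. *)
have v0 := dom _ feasible_set0; have vlm := dom _ (feasible_set1 lm).
rewrite choice_util_set0 !choice_util_set1 !choice_util_set2 //= in v0 vlm.
case: (feasibleP fS) by_shift
  => [_|_|_|_| k kout by_shift | k kout by_shift | k kout _ | k1 k2 k12 k1out k2out by_shift].
- by rewrite choice_util_set0 choice_util_set1 choice_util_set2 //; lra.
- by left.
- by rewrite !choice_util_set1 choice_util_set2 //; lra.
- by right.
- by apply: by_shift; rewrite big_set1; have := Dk k kout; lra.
- apply: by_shift; rewrite big_setU1 ?big_set1 ?l_notin //=;
    by have := Dk k kout; lra.
- have vk := dom _ (feasible_set1 k).
  have klm : lm != k by apply: contraNneq kout => <-; rewrite !inE eqxx orbT.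
  have vlmk := dom _ (feasible_set2 klm).
  have Gamma_lmk : Gamma [set lm; k]%SET <= 0.
    apply: Gamma_le0 klm _; apply: contraNneq kout => lmk_eq.
    have : k \in [set lm; k]%SET by rewrite !inE eqxx orbT.
    by rewrite lmk_eq !inE.
  rewrite !choice_util_set1 !choice_util_set2 //= in vk vlmk *.
  by have := Dk k kout; lra.
- apply: by_shift; rewrite big_setU1 ?big_set1 ?inE //=;
    by have := Dk k1 k1out; have := Dk k2 k2out; lra.
Qed.

Lemma choice_stays_in_partner Dd :
  (forall k1 k2, k1 != k2 -> [set k1; k2]%SET != [set l; lm]%SET ->
     Gamma [set k1; k2]%SET <= 0) ->
  Dd l <= 0 -> Dd l + Num.sg (Gamma [set l; lm]%SET) * Dd lm <= 0 ->
  (forall k, k \notin [:: l; lm] -> 0 <= Dd k /\ Dd lm <= Dd k) ->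
  choice_stays_in Gamma Dd [pred S | (S == [set l]%SET) || (S == [set l; lm]%SET)].
Proof.
move=> Gamma_le0 Dl sgD Dk u S0 S0D /is_max_dominated/(_ S0D) dom.
have [maxS|maxS] := dominated_is_max (feasible_set1 l) (feasible_set2 l_neq_lm)
  (dominated_partner_unshift Gamma_le0 Dl sgD Dk dom).
  by exists [set l]%SET; rewrite // inE eqxx.
by exists [set l; lm]%SET; rewrite // inE eqxx orbT.
Qed.

End good_with_partner.

Section measurable_sets.
Context d (T : measurableType d).

Lemma measurable_prop (P : Prop) : measurable [set _ : T | P].
Proof.
have [p|np] := pselect P.
  by rewrite (_ : [set _ | P] = setT) //; apply/seteqP; split.
by rewrite (_ : [set _ | P] = set0) //; apply/seteqP; split.
Qed.

Lemma measurable_imply (P : Prop) (B : set T) :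
  measurable B -> measurable [set x | P -> B x].
Proof.
have [p|np] := pselect P => mB.
  by rewrite (_ : [set _ | _] = B) //; apply/seteqP; split => x /=; auto.
by rewrite (_ : [set _ | _] = setT) //; apply/seteqP; split => // x _ /np [].
Qed.

Lemma measurable_forall (I : finType) (Q : I -> set T) :
  (forall i, measurable (Q i)) -> measurable [set x | forall i, Q i x].
Proof.
move=> mQ; rewrite (_ : [set _ | _] = \bigcap_(i in [set: I]) Q i).
  by apply: fin_bigcap_measurable => // i _; exact: mQ.
by apply/seteqP; split => [x Qx i _|x Qx i]; exact: Qx.
Qed.

Lemma measurable_exists (I : finType) (Q : I -> set T) :
  (forall i, measurable (Q i)) -> measurable [set x | exists i, Q i x].
Proof.
move=> mQ; rewrite (_ : [set _ | _] = \bigcup_(i in [set: I]) Q i).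
  by apply: fin_bigcup_measurable => // i _; exact: mQ.
by apply/seteqP; split => x [i]; exists i.
Qed.

Lemma measurable_le (R : realType) (f g : T -> R) :
  measurable_fun setT f -> measurable_fun setT g -> measurable [set x | f x <= g x].
Proof. by move=> mf mg; rewrite -[X in measurable X]setTI; exact: measurable_fun_le. Qed.

Lemma measurable_mem (I : finType) (Y : T -> I) (K : pred I) :
  (forall i, measurable [set x | Y x = i]) -> measurable [set x | Y x \in K].
Proof.
move=> mY; rewrite (_ : [set _ | _] = [set x | exists i, i \in K /\ Y x = i]).
  by apply: measurable_exists => i; apply: measurableI; [exact: measurable_prop|exact: mY].
by apply/seteqP; split => [x Kx|x [i [Ki Yx]]]; [exists (Y x) | rewrite /= Yx].
Qed.

End measurable_sets.

(* A profile v stores v j = (α_j, ε_j), the fixed effect and the shock of good j. *)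
Definition profile (R : realType) (L : finType) := {ffun L -> R * R}.
HB.instance Definition _ (R : realType) (L : finType) := Choice.on (profile R L).
HB.instance Definition _ (R : realType) (L : finType) :=
  isPointed.Build (profile R L) [ffun=> (0, 0)].

Section profile_space.
Context {R : realType} {L : finType}.
Implicit Types (As Bs : L -> set R).

Definition rect As Bs : set (profile R L) :=
  [set v | forall j, As j (v j).1 /\ Bs j (v j).2].

Definition rects : set (set (profile R L)) :=
  [set E | exists As Bs, [/\ forall j, measurable (As j),
                             forall j, measurable (Bs j) & E = rect As Bs]].

Local Notation space := (g_sigma_algebraType rects).

Lemma rectI As Bs As' Bs' :
  rect As Bs `&` rect As' Bs' = rect (fun j => As j `&` As' j) (fun j => Bs j `&` Bs' j).
Proof.
apply/seteqP; split => [v [vAB vAB'] j|v vAB]; first by case: (vAB j); case: (vAB' j).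
by split=> j; case: (vAB j) => -[? ?] [? ?].
Qed.

Lemma rect_single_fst (j : L) (B : set R) :
  rect (fun i => if i == j then B else setT) (fun=> setT) = [set v | B (v j).1].
Proof.
apply/seteqP; split => [v /(_ j)[]|v Bv i /=]; first by rewrite eqxx.
by case: eqP => [->|].
Qed.

Lemma rect_single_snd (j : L) (B : set R) :
  rect (fun=> setT) (fun i => if i == j then B else setT) = [set v | B (v j).2].
Proof.
apply/seteqP; split => [v /(_ j)[_]|v Bv i /=]; first by rewrite eqxx.
by case: eqP => [->|].
Qed.

Lemma measurable_profile_fst (j : L) : measurable_fun setT (fun v : space => (v j).1).
Proof.
move=> _ B mB; rewrite setTI -[X in measurable X]rect_single_fst.
by apply: sub_sigma_algebra; exists (fun i => if i == j then B else setT), (fun=> setT);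
  split=> // i; case: eqP.
Qed.

Lemma measurable_profile_snd (j : L) : measurable_fun setT (fun v : space => (v j).2).
Proof.
move=> _ B mB; rewrite setTI -[X in measurable X]rect_single_snd.
by apply: sub_sigma_algebra; exists (fun=> setT), (fun i => if i == j then B else setT);
  split=> // i; case: eqP.
Qed.

Definition util_of (c : L -> R) (v : profile R L) : L -> R :=
  fun j => c j + (v j).1 + (v j).2.

Lemma measurable_is_max (Gamma : {set L} -> R) (c : L -> R) (S : {set L}) :
  measurable [set v : space | is_max Gamma (util_of c v) S].
Proof.
have mU S' : measurable_fun setT (fun v : space => choice_util Gamma (util_of c v) S').
  apply: measurable_realfun.measurable_funD => //; under eq_fun do rewrite big_mkcond /=.
  apply: measurable_sum => j; case: (j \in S') => //.
  apply: measurable_realfun.measurable_funD; last exact: measurable_profile_snd.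
  by apply: measurable_realfun.measurable_funD; last exact: measurable_profile_fst.
apply: measurableI; first exact: measurable_prop.
by apply: measurable_forall => S'; apply: measurable_imply; exact: measurable_le.
Qed.

End profile_space.

Notation profile_space R L := (g_sigma_algebraType (@rects R L)).

Section profile_law.
Context {R : realType} {L : finType} {d} {T : measurableType d}.

Definition profile_of (a e : L -> T -> R) (w : T) : profile_space R L :=
  [ffun j => (a j w, e j w)].

Lemma util_of_profile_of (a e : L -> T -> R) (c : L -> R) (w : T) :
  util_of c (profile_of a e w) = (fun j => c j + a j w + e j w).
Proof. by apply/funext => j; rewrite /util_of ffunE. Qed.

Lemma preimage_profile_of_rect (a e : L -> T -> R) (As Bs : L -> set R) :
  profile_of a e @^-1` rect As Bs = [set w | forall j, As j (a j w) /\ Bs j (e j w)].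
Proof. by apply/seteqP; split => w /= + j => /(_ j); rewrite ffunE. Qed.

Lemma measurable_profile_of (a e : L -> T -> R) :
  (forall j, measurable_fun setT (a j)) -> (forall j, measurable_fun setT (e j)) ->
  measurable_fun setT (profile_of a e).
Proof.
move=> ma me; apply: (@measurability _ _ T (profile_space R L) setT _ (@rects R L)) => //.
move=> _ [_ [As [Bs [mAs mBs ->]]] <-].
rewrite setTI preimage_profile_of_rect; apply: measurable_forall => j.
by apply: measurableI; rewrite -[X in measurable X]setTI; [exact: ma | exact: me].
Qed.

(* Rectangles are closed under intersection and generate the σ-algebra, so
   equality of the two laws on rectangles extends to every measurable set. *)
Lemma profile_of_law_eq (P : probability T R) (a es et : L -> T -> R) :
  (forall j, measurable_fun setT (a j)) -> (forall j, measurable_fun setT (es j)) ->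
  (forall j, measurable_fun setT (et j)) ->
  (forall As Bs : L -> set R, (forall j, measurable (As j)) -> (forall j, measurable (Bs j)) ->
     P [set w | forall j, As j (a j w) /\ Bs j (es j w)] =
     P [set w | forall j, As j (a j w) /\ Bs j (et j w)]) ->
  forall E : set (profile_space R L), measurable E ->
    P (profile_of a es @^-1` E) = P (profile_of a et @^-1` E).
Proof.
move=> ma mes met rect_eq E mE.
pose ms := measure_function_pushforward__canonical__measure_function_Measure P
  (measurable_profile_of ma mes).
pose mt := measure_function_pushforward__canonical__measure_function_Measure P
  (measurable_profile_of ma met).
apply: (@g_sigma_algebra_measure_unique _ R (profile_space R L) rects _ (fun=> setT) _ _
  ms mt _ _ _ E mE).
- by move=> A GA; apply: sub_sigma_algebra.
- by exists (fun=> setT), (fun=> setT); split => //; apply/seteqP; split.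
- by apply/seteqP; split => // v _; exists 0%N.
- move=> _ _ [As [Bs [mAs mBs ->]]] [As' [Bs' [mAs' mBs' ->]]]; rewrite rectI.
  by exists (fun j => As j `&` As' j), (fun j => Bs j `&` Bs' j); split => // j;
    apply: measurableI.
- move=> _ [As [Bs [mAs mBs ->]]].
  change (P (profile_of a es @^-1` rect As Bs) = P (profile_of a et @^-1` rect As Bs)).
  by rewrite !preimage_profile_of_rect; exact: rect_eq.
- move=> _; change (P (profile_of a es @^-1` setT) < +oo)%E.
  by rewrite preimage_setT probability_setT ltry.
Qed.

End profile_law.

Section two_periods.
Context {R : realType} {d} {Omega : measurableType d} (P : probability Omega R).
Context {L : finType} (Gamma : {set L} -> R).
Variables (alpha eps_s eps_t : L -> Omega -> R) (c_s c_t : L -> R).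
Variables (Y_s Y_t : Omega -> {set L}).
Hypothesis alpha_meas : forall j, measurable_fun setT (alpha j).
Hypothesis eps_s_meas : forall j, measurable_fun setT (eps_s j).
Hypothesis eps_t_meas : forall j, measurable_fun setT (eps_t j).
Hypothesis Y_s_meas : forall S, measurable [set w | Y_s w = S].
Hypothesis Y_t_meas : forall S, measurable [set w | Y_t w = S].
Hypothesis Y_s_max : forall w, is_max Gamma (fun j => c_s j + alpha j w + eps_s j w) (Y_s w).
Hypothesis Y_t_max : forall w, is_max Gamma (fun j => c_t j + alpha j w + eps_t j w) (Y_t w).
Hypothesis no_ties_t : P [set w | exists S1 S2 : {set L}, S1 != S2 /\
  is_max Gamma (fun j => c_t j + alpha j w + eps_t j w) S1 /\
  is_max Gamma (fun j => c_t j + alpha j w + eps_t j w) S2] = 0%E.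
Hypothesis stationary : forall As Bs : L -> set R,
  (forall j, measurable (As j)) -> (forall j, measurable (Bs j)) ->
  P [set w | forall j, As j (alpha j w) /\ Bs j (eps_s j w)] =
  P [set w | forall j, As j (alpha j w) /\ Bs j (eps_t j w)].

Lemma Pr_le_of_choice_stays_in (K : pred {set L}) :
  choice_stays_in Gamma (fun j => c_s j - c_t j) K ->
  (P [set w | Y_s w \in K] <= P [set w | Y_t w \in K])%E.
Proof.
(* {Y_s ∈ K} lies in the event F for the period-s profile, which has the same
   probability as F for the period-t profile, and the latter lies in {Y_t ∈ K} up
   to ties. *)
move=> stays.
pose F := [set v : profile_space R L | exists S, S \in K /\ is_max Gamma (util_of c_t v) S].
pose Ties := [set v : profile_space R L | exists S1 S2 : {set L}, S1 != S2 /\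
  is_max Gamma (util_of c_t v) S1 /\ is_max Gamma (util_of c_t v) S2].
have mF : measurable F.
  apply: measurable_exists => S.
  by apply: measurableI; [exact: measurable_prop | exact: measurable_is_max].
have mTies : measurable Ties.
  apply: measurable_exists => S1; apply: measurable_exists => S2.
  by apply: measurableI; [exact: measurable_prop | apply: measurableI; exact: measurable_is_max].
have mpre e E : (forall j, measurable_fun setT (e j)) -> measurable E ->
    measurable (profile_of alpha e @^-1` E).
  by move=> me mE; rewrite -[X in measurable X]setTI; exact: measurable_profile_of.
have mY_t : measurable [set w | Y_t w \in K] by exact: measurable_mem.
have Ties_null : P (profile_of alpha eps_t @^-1` Ties) = 0%E.
  rewrite -no_ties_t; congr (P _).
  by apply/seteqP; split => w; rewrite /Ties /= util_of_profile_of.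
have Y_s_F : [set w | Y_s w \in K] `<=` profile_of alpha eps_s @^-1` F.
  move=> w /= Y_sK; rewrite /F /= util_of_profile_of.
  have [S SK maxS] : exists2 S, S \in K &
      is_max Gamma (fun j => c_t j + alpha j w + eps_s j w) S.
    apply: stays Y_sK _.
    rewrite (_ : (fun j => _) = (fun j => c_s j + alpha j w + eps_s j w)); first exact: Y_s_max.
    by apply/funext => j; ring.
  by exists S.
have F_Y_t : profile_of alpha eps_t @^-1` F `<=`
    [set w | Y_t w \in K] `|` profile_of alpha eps_t @^-1` Ties.
  move=> w; rewrite /F /Ties /= !util_of_profile_of => -[S [SK maxS]].
  have [Y_tK|Y_tK] := boolP (Y_t w \in K); [left | right] => //.
  by exists S, (Y_t w); split; [apply: contraNneq Y_tK => <- | split; last exact: Y_t_max].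
apply: (@le_trans _ _ (P (profile_of alpha eps_s @^-1` F))).
  by rewrite le_measure ?inE //; [exact: measurable_mem | exact: mpre eps_s_meas mF].
rewrite (profile_of_law_eq alpha_meas eps_s_meas eps_t_meas stationary mF).
have mTies_t := mpre _ _ eps_t_meas mTies.
apply: (@le_trans _ _ (P ([set w | Y_t w \in K] `|` profile_of alpha eps_t @^-1` Ties))).
  by rewrite le_measure ?inE //; [exact: mpre eps_t_meas mF | exact: measurableU].
apply: (le_trans (measureU2 P mY_t mTies_t)).
by rewrite [X in (_ + X)%E](_ : _ = 0%E) ?adde0.
Qed.

End two_periods.

Lemma partner_cases (L : finType) (A B l lm : L) : A != B ->
  (l, lm) \in [:: (A, B); (B, A)] ->
  [/\ l != lm, [set A; B]%SET = [set l; lm]%SET & [:: A; B] =i [:: l; lm]].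
Proof.
move=> AB; rewrite !inE => /orP[] /eqP[-> ->]; first by split.
by split; [rewrite eq_sym | exact: finset.setUC | move=> k; rewrite !inE orbC].
Qed.

Unset Implicit Arguments.

Theorem proposition5
  (R : realType) (d : measure_display) (Omega : measurableType d)
  (P : probability Omega R)
  (L : finType) (A B : L) (hAB : A != B)
  (Gamma : {set L} -> R)
  (hGamma : forall j1 j2 : L, j1 != j2 -> [set j1; j2]%SET != [set A; B]%SET ->
              Gamma [set j1; j2]%SET <= 0)
  (p : nat) (beta : 'I_p -> R) (hbeta : exists k : 'I_p, beta k != 0)
  (T s t : nat) (hT : (2 <= T)%N) (hs : (1 <= s <= T)%N) (ht : (1 <= t <= T)%N)
  (hst : s != t)
  (X : nat -> L -> 'I_p -> R)          (* X s = x_s, X t = x_t (conditioned on) *)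
  (alpha : L -> Omega -> R)            (* fixed effects alpha_ij *)
  (eps : nat -> L -> Omega -> R)       (* shocks eps_ijr *)
  (Y : nat -> Omega -> {set L})        (* choices Y_ir *)
  (halpha : forall j, measurable_fun setT (alpha j))
  (heps : forall r j, measurable_fun setT (eps r j))
  (hYmeas : forall r (S : {set L}), measurable [set w | Y r w = S])
  (hYmax : forall r w, r \in [:: s; t] ->
     is_max Gamma (fun j => xdelta (X r) beta j + alpha j w + eps r j w) (Y r w))
  (hties : forall r, r \in [:: s; t] ->
     P [set w | exists S1 S2 : {set L}, S1 != S2 /\
          is_max Gamma (fun j => xdelta (X r) beta j + alpha j w + eps r j w) S1 /\
          is_max Gamma (fun j => xdelta (X r) beta j + alpha j w + eps r j w) S2]
       = 0%E)
  (hstat : forall (As Bs : L -> set R),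
     (forall j, measurable (As j)) -> (forall j, measurable (Bs j)) ->
     P [set w | forall j, As j (alpha j w) /\ Bs j (eps s j w)] =
     P [set w | forall j, As j (alpha j w) /\ Bs j (eps t j w)]) :
  let Pr r (K : pred {set L}) := P [set w | Y r w \in K] in
  let Dd j := xdelta (X s) beta j - xdelta (X t) beta j in
  (* (i) *)
  (forall j : L, (Pr t (pred1 [set j]%SET) < Pr s (pred1 [set j]%SET))%E ->
     0 < Dd j \/ exists k : L, k != j /\ Dd k < 0) /\
  (* (ii) *)
  (forall j1 j2 : L, j1 != j2 ->
     (Pr t (pred1 [set j1; j2]%SET) < Pr s (pred1 [set j1; j2]%SET))%E ->
     (exists j, j \in [:: j1; j2] /\ 0 < Dd j) \/
     exists k : L, k \notin [:: j1; j2] /\ Dd k < 0) /\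
  (* (iii) *)
  (forall l lm : L, (l, lm) \in [:: (A, B); (B, A)] ->
     let D := [pred S : {set L} | (S == [set l]%SET) || (S == [set A; B]%SET)] in
     (Pr t D < Pr s D)%E ->
     [\/ 0 < Dd l,
         0 < Dd l + (Num.sg (Gamma [set A; B]%SET)) * Dd lm,
         exists k : L, k \notin [:: A; B] /\ 0 < Dd lm - Dd k
       | exists k : L, k \notin [:: A; B] /\ Dd k < 0]).
Proof.
move=> Pr Dd.
have s_in : s \in [:: s; t] by rewrite !inE eqxx.
have t_in : t \in [:: s; t] by rewrite !inE eqxx orbT.
have Pr_lt K (C : Prop) : (~ C -> choice_stays_in Gamma Dd K) -> (Pr t K < Pr s K)%E -> C.
  move=> stays lt_ts; apply: contrapT => /stays/(Pr_le_of_choice_stays_in halpha (heps s)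
    (heps t) (hYmeas s) (hYmeas t) (hYmax s ^~ s_in) (hYmax t ^~ t_in) (hties t t_in) hstat).
  by rewrite leNgt lt_ts.
have le0 (x : R) : ~ 0 < x -> x <= 0 by move/negP; rewrite -leNgt.
have Dd_ge0 (Q : pred L) : ~ (exists k, Q k /\ Dd k < 0) -> forall k, Q k -> 0 <= Dd k.
  by move=> noQ k Qk; rewrite leNgt; apply/negP => Dk; apply: noQ; exists k.
split; [|split].
- move=> j; apply: Pr_lt => /not_orP[/le0 Dj /Dd_ge0 Dk].
  by apply: choice_stays_in_pred1 => [i /set1P-> // | k]; rewrite inE => /Dk.
- move=> j1 j2 _; apply: Pr_lt => /not_orP[noj /Dd_ge0 Dk].
  apply: choice_stays_in_pred1 => [i ij | k kj]; last by apply: Dk; rewrite !inE -in_set2.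
  by apply: le0 => Di; apply: noj; exists i; rewrite !inE -in_set2.
move=> l lm /(partner_cases hAB)[l_neq_lm eAB ABE] D.
have -> : D = [pred S | (S == [set l]%SET) || (S == [set l; lm]%SET)].
  by rewrite /D; congr SimplPred; apply/funext => S; rewrite eAB.
apply: Pr_lt.
rewrite or4E eAB => /not_orP[/le0 Dl /not_orP[/le0 sgD /not_orP[no_lmk /Dd_ge0 Dk]]].
apply: choice_stays_in_partner => // [k1 k2|k kout]; first by rewrite -eAB; exact: hGamma.
rewrite -ABE in kout; split; first exact: Dk.
by rewrite -subr_le0 le0 // => lmk; apply: no_lmk; exists k.
Qed.
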